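(* Let $p$ be a prime and $e\geq 2$ an integer. For each integer $r\geq 2$ let $S(p,e,r)$ be the smallest set of positive integers such that $r\in S$, $n\in S$ whenever $n^e\in S$, and $(n+p)^e\in S$ whenever $n\in S$. Let $V=\bigcup_{r\geq 2}S(p,e,r)$ and let $\Gamma(p,e)$ be the directed graph on $V$ with up-edges $(n,(n+p)^e)$ and down-edges $(n^e,n)$ for $n\in V$. Then no path in $\Gamma(p,e)$ contains $UUDD$ as a subpath; that is, there do not exist vertices $x,a,z,b,y\in V$ with $a=(x+p)^e$, $z=(a+p)^e$, $z=b^e$ and $b=y^e$.
   Context: Each edge of a path is labelled $U$ if it is an up-edge and $D$ if it is a down-edge; a path contains $UUDD$ as a subpath if it has four consecutive edges labelled $U,U,D,D$. *)

From mathcomp Require Import all_boot.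
Set Implicit Arguments. Unset Strict Implicit. Unset Printing Implicit Defensive.

Inductive S_set (p e r : nat) : nat -> Prop :=
  | S_base : S_set p e r r
  | S_root : forall n, 0 < n -> S_set p e r (n ^ e) -> S_set p e r n
  | S_up   : forall n, S_set p e r n -> S_set p e r ((n + p) ^ e).

Definition Vset (p e : nat) (n : nat) : Prop := exists2 r, 2 <= r & S_set p e r n.

From mathcomp Require Import all_boot.
From mathcomp Require Import zify.

(* Two down-steps after two up-steps force b = a + p, hence
   y ^ e = (x + p) ^ e + p.  But with c = x + p, the e-th powers next to c ^ e
   are more than c >= p apart, so c ^ e + p is not an e-th power. *)

Lemma expn_succ_gap (c e : nat) : 1 < e -> c ^ e + c.+1 <= c.+1 ^ e.
Proof.
case: e => [|e] // e_gt0.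
have pow_le : c ^ e.+1 <= c * c.+1 ^ e.
  by rewrite expnS leq_mul2l leq_exp2r // leqnSn orbT.
have succ_le : c.+1 <= c.+1 ^ e by rewrite -{1}(expn1 c.+1) leq_pexp2l.
rewrite [c.+1 ^ e.+1]expnS mulSn; lia.
Qed.

Lemma expn_addn_neq (c d y e : nat) :
  1 < e -> 0 < d <= c -> c ^ e + d != y ^ e.
Proof.
move=> e_gt1 /andP[d_gt0 d_le_c]; apply/eqP => eq_pow.
have e_gt0 : 0 < e by apply: ltnW.
have c_lt_y : c < y by rewrite -(ltn_exp2r _ _ e_gt0) -eq_pow -addn1 leq_add2l.
have y_lt_c1 : y < c.+1.
  rewrite -(ltn_exp2r _ _ e_gt0) -eq_pow.
  by rewrite (leq_trans _ (expn_succ_gap c e e_gt1)) // ltn_add2l ltnS.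
by rewrite ltnS leqNgt c_lt_y in y_lt_c1.
Qed.

Theorem theorem24 (p e : nat) (hp : prime p) (he : 2 <= e) :
  ~ (exists x a z b y : nat,
        [/\ Vset p e x, Vset p e a, Vset p e z, Vset p e b & Vset p e y] /\
        [/\ a = (x + p) ^ e, z = (a + p) ^ e, z = b ^ e & b = y ^ e]).
Proof.
move=> [x [a [z [b [y [_ [def_a -> eq_b def_b]]]]]]].
have b_eq : b = a + p by apply: (expIn (ltnW he)); rewrite eq_b.
have p_le : 0 < p <= x + p by rewrite prime_gt0 // leq_addl.
by have := expn_addn_neq (x + p) p y e he p_le; rewrite -def_a -b_eq def_b eqxx.
Qed.
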